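(* For every program $C$, all hyperquantities $ff,gg$ and every real constant $r\ge0$, $$\mathrm{whp}[C](r\cdot ff\cdot gg)=r\cdot\mathrm{whp}[C](ff)\cdot\mathrm{whp}[C](gg),$$ where products of hyperquantities are pointwise in $[0,+\infty]$.
   Context: Semiring. Fix $\mathcal A=\langle U,\oplus,\odot,\mathbb 0,\mathbb 1\rangle$, a possibly partial semiring: $\langle U,\oplus,\mathbb 0\rangle$ is a commutative monoid in which $\oplus$ may be partial, $\langle U,\odot,\mathbb 1\rangle$ is a (total) monoid, $\odot$ distributes over $\oplus$ on both sides, and $\mathbb 0\odot u=u\odot\mathbb 0=\mathbb 0$. The natural order is $u\le v$ iff $u\oplus w=v$ for some $w\in U$. Standing assumptions: $\le$ is a complete partial order; $\mathcal A$ is complete (there is an infinitary sum $\bigoplus_{i\in I}$ that agrees with $\oplus$ on finite index sets, satisfies $v\odot\bigoplus_i u_i=\bigoplus_i v\odot u_i$ and $(\bigoplus_i u_i)\odot v=\bigoplus_i u_i\odot v$ whenever defined, and is invariant under partitioning the index set); $\mathcal A$ is Scott continuous; and $U$ has a greatest element. States and quantities. $\mathrm{Vars}$ finite, $\Sigma=\{\sigma:\mathrm{Vars}\to\mathbb N\}$, $\sigma[x\mapsto v]$ updated state; expressions denote $\llbracket e\rrbracket:\Sigma\to\mathbb N\cup U$. A quantity is $f:\Sigma\to U$; $\mathbb A$ the set of quantities; operations lifted pointwise; $[\varphi](\sigma)=\mathbb 1$ if $\sigma\models\varphi$, else $\mathbb 0$; $f[x/\alpha]=\sigma\mapsto f(\sigma[x\mapsto\alpha])$.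 Programs $C::= x:=e\mid x:=\ast\mid \mathtt{weight}\ e\mid C;C\mid C+C\mid \mathtt{iter}(C,e,e')$, assumed well-formed so that all sums arising are defined. Strongest post $\mathrm{sp}[C]:\mathbb A\to\mathbb A$: $\mathrm{sp}[x:=e](f)=\bigoplus_{\alpha\in\mathbb N}f[x/\alpha]\odot[x=e[x/\alpha]]$ with $[x=e[x/\alpha]](\sigma)=\mathbb 1$ iff $\sigma(x)=\llbracket e\rrbracket(\sigma[x\mapsto\alpha])$; $\mathrm{sp}[x:=\ast](f)=\bigoplus_{\alpha}f[x/\alpha]$; $\mathrm{sp}[\mathtt{weight}\ w](f)=f\odot\llbracket w\rrbracket$; $\mathrm{sp}[C_1;C_2](f)=\mathrm{sp}[C_2](\mathrm{sp}[C_1](f))$; $\mathrm{sp}[C_1+C_2](f)=\mathrm{sp}[C_1](f)\oplus\mathrm{sp}[C_2](f)$; $\mathrm{sp}[\mathtt{iter}(C,e,e')](f)=\big(\mathrm{lfp}\,X.\ f\oplus\mathrm{sp}[C](X\odot\llbracket e\rrbracket)\big)\odot\llbracket e'\rrbracket$ (pointwise natural order on $\mathbb A$). Hyperquantities. A hyperquantity is a function $ff:\mathbb A\to[0,+\infty]$. For $\nu\in\mathbb A$, $\chi_\nu(g)=1$ if $g=\nu$ and $0$ otherwise. Arithmetic on values in $[0,+\infty]$ with $0\cdot\infty=0$. Weakest hyper pre $\mathrm{whp}[C]$, defined inductively: $\mathrm{whp}[x:=e](ff)=\lambda f.\ ff(\mathrm{sp}[x:=e](f))$; $\mathrm{whp}[x:=\ast](ff)=\lambda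 f.\ ff(\bigoplus_{\alpha}f[x/\alpha])$; $\mathrm{whp}[\mathtt{weight}\ w](ff)=\lambda f.\ ff(f\odot\llbracket w\rrbracket)$; $\mathrm{whp}[C_1;C_2](ff)=\mathrm{whp}[C_1](\mathrm{whp}[C_2](ff))$; $\mathrm{whp}[C_1+C_2](ff)=\lambda f.\ \sum_{\nu_1,\nu_2\in\mathbb A}ff(\nu_1\oplus\nu_2)\cdot\mathrm{whp}[C_1](\chi_{\nu_1})(f)\cdot\mathrm{whp}[C_2](\chi_{\nu_2})(f)$ (terms with $\nu_1\oplus\nu_2$ undefined omitted); $\mathrm{whp}[\mathtt{iter}(C,e,e')](ff)=\lambda f.\ ff\big((\mathrm{lfp}\,X.\ f\oplus\mathrm{sp}[C](X\odot\llbracket e\rrbracket))\odot\llbracket e'\rrbracket\big)$. *)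

From HB Require Import structures.
From mathcomp Require Import all_boot all_order all_algebra.
From mathcomp Require Import all_classical all_reals.
From mathcomp Require Import ereal esum.
Set Implicit Arguments. Unset Strict Implicit. Unset Printing Implicit Defensive.
Import Order.TTheory GRing.Theory Num.Theory.

Local Open Scope classical_set_scope.

Definition oadd {U : Type} (padd : U -> U -> option U) (a b : option U) :=
  match a, b with Some u, Some v => padd u v | _, _ => None end.

Record psemiring := PSemiring {
  car  : Type;
  padd : car -> car -> option car;
  pmul : car -> car -> car;
  zero : car;
  one  : car;
  psum : forall I : Type, (I -> car) -> option car;
  padd_comm : forall u v, padd u v = padd v u;
  padd_assoc : forall u v w,
    oadd padd (padd u v) (Some w) = oadd padd (Some u) (padd v w);
  padd_0 : forall u, padd u zero = Some u;
  pmul_assoc : forall u v w, pmul u (pmul v w) = pmul (pmul u v) w;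
  pmul_1l : forall u, pmul one u = u;
  pmul_1r : forall u, pmul u one = u;
  pmul_Dr : forall w u v s, padd u v = Some s -> padd (pmul w u) (pmul w v) = Some (pmul w s);
  pmul_Dl : forall w u v s, padd u v = Some s -> padd (pmul u w) (pmul v w) = Some (pmul s w);
  pmul_0l : forall u, pmul zero u = zero;
  pmul_0r : forall u, pmul u zero = zero;
  nle_antisym : forall u v,
    (exists w, padd u w = Some v) -> (exists w, padd v w = Some u) -> u = v;
  cpo : forall D : set car, D !=set0 ->
    (forall x y, D x -> D y -> exists z, [/\ D z,
        (exists w, padd x w = Some z) & (exists w, padd y w = Some z)]) ->
    exists d, (forall x, D x -> exists w, padd x w = Some d) /\
              (forall b, (forall x, D x -> exists w, padd x w = Some b) ->
                         exists w, padd d w = Some b);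
  psum_fin : forall n (u : 'I_n -> car),
    psum u = foldr (fun i acc => oadd padd (Some (u i)) acc) (Some zero) (enum 'I_n);
  psum_mull : forall I (u : I -> car) v s,
    psum u = Some s -> psum (fun i => pmul v (u i)) = Some (pmul v s);
  psum_mulr : forall I (u : I -> car) v s,
    psum u = Some s -> psum (fun i => pmul (u i) v) = Some (pmul s v);
  psum_partition : forall (I J : Type) (p : I -> J) (u : I -> car) (s : J -> car),
    (forall j, psum (fun i : {i : I | p i = j} => u (proj1_sig i)) = Some (s j)) ->
    psum s = psum u;
  scott_mul : forall D d v, D !=set0 ->
    (forall x y, D x -> D y -> exists z, [/\ D z,
        (exists w, padd x w = Some z) & (exists w, padd y w = Some z)]) ->
    (forall x, D x -> exists w, padd x w = Some d) ->
    (forall b, (forall x, D x -> exists w, padd x w = Some b) -> exists w, padd d w = Some b) ->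
    let Dv := [set pmul v x | x in D] in
    let Dv' := [set pmul x v | x in D] in
    ((forall x, Dv x -> exists w, padd x w = Some (pmul v d)) /\
     (forall b, (forall x, Dv x -> exists w, padd x w = Some b) ->
                exists w, padd (pmul v d) w = Some b)) /\
    ((forall x, Dv' x -> exists w, padd x w = Some (pmul d v)) /\
     (forall b, (forall x, Dv' x -> exists w, padd x w = Some b) ->
                exists w, padd (pmul d v) w = Some b));
  scott_add : forall D d v s, D !=set0 ->
    (forall x y, D x -> D y -> exists z, [/\ D z,
        (exists w, padd x w = Some z) & (exists w, padd y w = Some z)]) ->
    (forall x, D x -> exists w, padd x w = Some d) ->
    (forall b, (forall x, D x -> exists w, padd x w = Some b) -> exists w, padd d w = Some b) ->
    padd d v = Some s ->
    let Dv := [set t | exists2 x, D x & padd x v = Some t] in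
    (forall x, Dv x -> exists w, padd x w = Some s) /\
    (forall b, (forall x, Dv x -> exists w, padd x w = Some b) ->
               exists w, padd s w = Some b);
  top_ex : exists t, forall u, exists w, padd u w = Some t
}.

Section Semantics.
Variable A : psemiring.
Variable Vars : finType.

Definition state := Vars -> nat.
Definition upd (s : state) (x : Vars) (v : nat) : state :=
  fun y => if y == x then v else s y.

Definition quantity := state -> car A.

Definition nle (u v : car A) := exists w, padd u w = Some v.
Definition qle (f g : quantity) := forall s, nle (f s) (g s).

Definition qadd (f g : quantity) : option quantity :=
  match pselect (forall s, exists v, padd (f s) (g s) = Some v) with
  | left _ => Some (fun s => odflt (zero A) (padd (f s) (g s)))
  | right _ => None
  end.

Definition qsum (F : nat -> quantity) : option quantity :=
  match pselect (forall s, exists v, psum (fun a : nat => F a s) = Some v) with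
  | left _ => Some (fun s => odflt (zero A) (psum (fun a : nat => F a s)))
  | right _ => None
  end.

Definition qmul (f g : quantity) : quantity := fun s => pmul (f s) (g s).

Definition qsubst (f : quantity) (x : Vars) (a : nat) : quantity :=
  fun s => f (upd s x a).

(* programs; expressions are given by their semantics ⟦e⟧ *)
Inductive prog :=
| Assign of Vars & (state -> nat)
| Nondet of Vars
| Weight of (state -> car A)
| Seq of prog & prog
| Choice of prog & prog
| Iter of prog & (state -> car A) & (state -> car A).

Definition obind' (o : option quantity) (k : quantity -> option quantity) :=
  match o with Some f => k f | None => None end.

Definition plfp (Phi : quantity -> option quantity) : option quantity :=
  match pselect (exists X, Phi X = Some X /\
                   forall Y, Phi Y = Some Y -> qle X Y) with
  | left H => Some (projT1 (cid H))
  | right _ => None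
  end.

(* strongest post; None = an arising sum is undefined *)
Fixpoint sp (C : prog) (f : quantity) : option quantity :=
  match C with
  | Assign x e => qsum (fun a => qmul (qsubst f x a)
                     (fun s => if s x == e (upd s x a) then one A else zero A))
  | Nondet x => qsum (fun a => qsubst f x a)
  | Weight w => Some (qmul f w)
  | Seq C1 C2 => obind' (sp C1 f) (sp C2)
  | Choice C1 C2 =>
      obind' (sp C1 f) (fun g1 => obind' (sp C2 f) (fun g2 => qadd g1 g2))
  | Iter C e e' =>
      obind' (plfp (fun X => obind' (sp C (qmul X e)) (fun Y => qadd f Y)))
             (fun L => Some (qmul L e'))
  end.

Fixpoint wf (C : prog) : Prop :=
  (forall f, exists g, sp C f = Some g) /\
  match C with
  | Seq C1 C2 | Choice C1 C2 => wf C1 /\ wf C2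
  | Iter C1 _ _ => wf C1
  | _ => True
  end.

Variable R : realType.
Local Open Scope ereal_scope.

(* hyperquantities: functions 𝔸 -> [0,+∞] (nonnegativity imposed separately) *)
Definition hyperq := quantity -> \bar R.

Definition chi (nu : quantity) : hyperq :=
  fun g => if pselect (g = nu) then 1 else 0.

(* apply ff to an (always defined for well-formed programs) quantity;
   convention: value 0 if undefined *)
Definition app (ff : hyperq) (o : option quantity) : \bar R :=
  match o with Some g => ff g | None => 0 end.

Definition qpair : Type := (quantity * quantity)%type.
HB.instance Definition _ := gen_eqMixin qpair.
HB.instance Definition _ := gen_choiceMixin qpair.

Fixpoint whp (C : prog) (ff : hyperq) : hyperq :=
  match C with
  | Assign x e => fun f => app ff (sp (Assign x e) f)
  | Nondet x => fun f => app ff (qsum (fun a => qsubst f x a))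
  | Weight w => fun f => ff (qmul f w)
  | Seq C1 C2 => whp C1 (whp C2 ff)
  | Choice C1 C2 => fun f =>
      esum [set: qpair] (fun p : qpair =>
        app ff (qadd p.1 p.2) * whp C1 (chi p.1) f * whp C2 (chi p.2) f)
  | Iter C e e' => fun f => app ff (sp (Iter C e e') f)
  end.

End Semantics.

From mathcomp Require Import all_boot all_order all_algebra.
From mathcomp Require Import all_classical all_reals.
From mathcomp Require Import ereal esum.
Set Implicit Arguments. Unset Strict Implicit. Unset Printing Implicit Defensive.
Import Order.TTheory GRing.Theory Num.Theory.
Local Open Scope ereal_scope.

(* For a nonnegative hyperquantity, whp[C](ff) is just ff composed with
   sp[C]: the choice rule sums over all pairs (ν1, ν2), but the indicators
   whp[C_i](χ_{ν_i}) = χ_{ν_i}(sp[C_i] f) keep only the single pair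
   (sp[C1] f, sp[C2] f).  Multiplicativity of whp[C] is then the
   (trivial) multiplicativity of precomposition. *)

Section WeakestHyperPre.
Variables (A : psemiring) (Vars : finType) (R : realType).

Implicit Types (ff gg : hyperq A Vars R) (o : option (quantity A Vars)).

Lemma app_ge0 ff o : (forall f, 0 <= ff f) -> 0 <= app ff o.
Proof. by move=> ff_ge0; case: o. Qed.

Lemma chi_ge0 (nu g : quantity A Vars) : 0 <= chi R nu g.
Proof. by rewrite /chi; case: pselect. Qed.

Lemma esum_app_chi (h : qpair A Vars -> \bar R) o1 o2 :
  (forall p, 0 <= h p) ->
  esum [set: qpair A Vars]
    (fun p => h p * app (chi R p.1) o1 * app (chi R p.2) o2) =
  match o1, o2 with Some g1, Some g2 => h (g1, g2) | _, _ => 0 end.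
Proof.
move=> h_ge0; case: o1 => [g1|]; last by rewrite esum1 // => p _; rewrite mule0 mul0e.
case: o2 => [g2|]; last by rewrite esum1 // => p _; rewrite mule0.
rewrite -(esum_set1 (t := (g1, g2) : qpair A Vars) (h_ge0 _)) [RHS]esum_mkcond.
apply: eq_esum => -[p1 p2] _ /=; rewrite /chi.
case: pselect => [e1|n1]; case: pselect => [e2|n2] /=.
- by rewrite !mule1 e1 e2 mem_set.
- by rewrite mule0 memNset // => -[_ /esym].
- by rewrite mule0 mul0e memNset // => -[/esym].
- by rewrite mule0 memNset // => -[/esym].
Qed.

Lemma whp_sp (C : prog A Vars) ff :
  (forall f, 0 <= ff f) -> forall f, whp C ff f = app ff (sp C f).
Proof.
elim: C ff => //= [C1 IH1 C2 IH2 | C1 IH1 C2 IH2] ff ff_ge0 f.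
- have whp2_ge0 g : 0 <= whp C2 ff g by rewrite IH2 // app_ge0.
  by rewrite IH1 //; case: (sp C1 f) => [g|] //=; rewrite IH2.
- transitivity (esum [set: qpair A Vars] (fun p => app ff (qadd p.1 p.2) *
      app (chi R p.1) (sp C1 f) * app (chi R p.2) (sp C2 f))).
    by apply: eq_esum => p _; rewrite (IH1 _ (chi_ge0 p.1)) (IH2 _ (chi_ge0 p.2)).
  rewrite esum_app_chi; last by move=> p; apply: app_ge0.
  by case: (sp C1 f) => [g1|] //=; case: (sp C2 f).
Qed.

Lemma app_mul ff gg (r : R) o :
  app (fun g => r%:E * ff g * gg g) o = r%:E * app ff o * app gg o.
Proof. by case: o => //=; rewrite !mule0. Qed.

End WeakestHyperPre.

Theorem mainTheorem9 (A : psemiring) (Vars : finType) (R : realType)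
  (C : prog A Vars) (ff gg : hyperq A Vars R) (r : R) :
  wf C ->
  (forall f, 0 <= ff f) -> (forall f, 0 <= gg f) -> (0 <= r)%R ->
  whp C (fun f => r%:E * ff f * gg f) =
  (fun f => r%:E * whp C ff f * whp C gg f).
Proof.
move=> _ ff_ge0 gg_ge0 r_ge0; apply: funext => f.
have prod_ge0 g : 0 <= r%:E * ff g * gg g by rewrite !mule_ge0.
by rewrite (whp_sp C prod_ge0) (whp_sp C ff_ge0) (whp_sp C gg_ge0) app_mul.
Qed.
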